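(* Let $x_1,\dots,x_n\in\mathbb R^d$ be fixed points, and let $Y_1,\dots,Y_n$ be independent square-integrable real random variables with $\mathbf EY_i=m(x_i)$ ($i=1,\dots,n$) for some function $m:\mathbb R^d\to\mathbb R$. Let $\mathcal P_n$ be a finite set and, for each $p\in\mathcal P_n$, let $m_p:\mathbb R^d\to\mathbb R$ be a fixed (non-random) function. Let $p^*\in\mathcal P_n$ be any (random) index satisfying $$\frac1n\sum_{i=1}^n|m_{p^*}(x_i)-Y_i|^2=\min_{p\in\mathcal P_n}\frac1n\sum_{i=1}^n|m_p(x_i)-Y_i|^2.$$ Then there is an absolute constant $c_1$ (not depending on $n$, $\epsilon$, the points, or the distributions) such that for every $\epsilon>0$, $$\mathbf P\Big\{\frac1n\sum_{i=1}^n|m_{p^*}(x_i)-m(x_i)|^2>\epsilon+18\min_{p\in\mathcal P_n}\frac1n\sum_{i=1}^n|m_p(x_i)-m(x_i)|^2\Big\}\le c_1\cdot\max_{i=1,\dots,n}\mathbf EY_i^2\cdot\frac{|\mathcal P_n|}{\epsilon\, n}.$$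
   Context: $|\mathcal P_n|$ denotes the cardinality of the finite set $\mathcal P_n$. *)

From HB Require Import structures.
From mathcomp Require Import all_boot all_order all_algebra.
From mathcomp Require Import all_classical all_reals all_analysis.
Set Implicit Arguments. Unset Strict Implicit. Unset Printing Implicit Defensive.
Import Order.TTheory GRing.Theory Num.Theory.
Local Open Scope classical_set_scope.
Local Open Scope ring_scope.

Definition mutually_independent {d} {T : measurableType d} {R : realType}
  (P : probability T R) (n : nat) (Y : 'I_n -> T -> R) : Prop :=
  forall (S : {set 'I_n}) (B : 'I_n -> set R),
    (forall i, measurable (B i)) ->
    P (\bigcap_(i in [set i | i \in S]) (Y i @^-1` B i)) =
    (\prod_(i in S) P (Y i @^-1` B i))%E.

(* minimum of a real function over a finite type (0 if the type is empty) *)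
Definition finmin (I : finType) (R : realType) (F : I -> R) : R :=
  match [pick i : I] with
  | Some i0 => \big[Num.min/F i0]_(i : I) F i
  | None => 0
  end.

Definition emp_l2 (R : realType) (n : nat) (a : 'I_n -> R) (b : 'I_n -> R) : R :=
  (n%:R)^-1 * \sum_(i < n) `|a i - b i| ^+ 2.

From HB Require Import structures.
From mathcomp Require Import all_boot all_order all_algebra.
From mathcomp Require Import all_classical all_reals all_analysis.
From mathcomp Require Import measurable_realfun.
From mathcomp Require Import ring lra.
Import Order.TTheory GRing.Theory Num.Theory.
Local Open Scope classical_set_scope.
Local Open Scope ring_scope.
Set Implicit Arguments. Unset Strict Implicit. Unset Printing Implicit Defensive.

(* Write [bias p = sum_i (m_p(x_i) - m(x_i))^2] and
   [cross p = sum_i (m_p(x_i) - m(x_i)) (Y_i - m(x_i))].  Expanding the square,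
   the empirical risk of [p] is [bias p - 2 cross p] plus a term independent of
   [p].  Independence makes the summands of [cross p] uncorrelated, so
   [E[cross p^2] <= M bias p] with [M = max_i E[Y_i^2]], and by Markov the event
   [cross p^2 > dl bias p] has probability at most [M / dl]; a union bound over
   [p] costs a factor [|P_n|].  Outside these events, comparing the least squares
   choice [p*] with the best [p], AM-GM on the cross terms gives
   [bias p* <= 6 dl + 4 bias p], which for [dl = eps n / 6] is the claim with
   [c1 = 6] (and [4] in place of [18]). *)

Section independent_expectation.
Local Open Scope ereal_scope.
Context d (T : measurableType d) (R : realType) (P : probability T R).
Variables X Y : {RV P >-> R}.
Hypothesis indepXY : forall A B, measurable A -> measurable B ->
  P (X @^-1` A `&` Y @^-1` B) = P (X @^-1` A) * P (Y @^-1` B).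
Hypotheses (X1 : (X : T -> R) \in Lfun P 1) (Y1 : (Y : T -> R) \in Lfun P 1)
  (XY1 : (X \* Y)%R \in Lfun P 1).

Definition pair_RV (w : T) : R * R := (X w, Y w).

Lemma measurable_pair_RV : measurable_fun setT pair_RV.
Proof. by apply/measurable_fun_pairP; split. Qed.

HB.instance Definition _ := isMeasurableFun.Build _ _ _ _ pair_RV measurable_pair_RV.

Let mul_coord (z : R * R) : \bar R := (z.1 * z.2)%:E.

Let measurable_mul : measurable_fun setT mul_coord.
Proof. by apply/measurable_EFinP; exact: measurable_funM. Qed.

(* Independence says that the joint law agrees with the product of the
   marginals on rectangles, hence everywhere by uniqueness of the product. *)
Let joint_law_prod A : measurable A ->
  (distribution P X \x distribution P Y) A = distribution P pair_RV A.
Proof.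
move: A; apply: product_measure_unique => A B mA mB /=.
exact: indepXY.
Qed.

Let integrable_mul_prod :
  (distribution P X \x distribution P Y).-integrable setT mul_coord.
Proof.
have : (distribution P pair_RV).-integrable setT mul_coord.
  apply: integrable_pushforward => //; rewrite preimage_setT.
  exact/Lfun1_integrable.
move/integrableP => [_ fin]; apply/integrableP; split => //.
rewrite (eq_measure_integral (distribution P pair_RV)) // => A mA _.
exact: joint_law_prod.
Qed.

Let expectation_id (Z : {RV P >-> R}) : (Z : T -> R) \in Lfun P 1 ->
  'E_P[Z] = \int[distribution P Z]_z z%:E.
Proof. by move=> Z1; rewrite unlock integral_distribution //; exact/Lfun1_integrable. Qed.

Let integrable_id (Z : {RV P >-> R}) : (Z : T -> R) \in Lfun P 1 ->
  (distribution P Z).-integrable setT (EFin \o id).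
Proof.
move=> Z1; apply: integrable_pushforward => //; first exact/measurable_EFinP.
by rewrite preimage_setT; exact/Lfun1_integrable.
Qed.

Lemma expectation_mul_indep : 'E_P[X \* Y] = 'E_P[X] * 'E_P[Y].
Proof.
transitivity (\int[distribution P X]_x fubini_F (distribution P Y) mul_coord x).
  rewrite (integral12_prod_meas1 integrable_mul_prod).
  rewrite (eq_measure_integral (distribution P pair_RV)); last first.
    by move=> A mA _; exact: joint_law_prod.
  rewrite integral_pushforward //.
  - by rewrite preimage_setT unlock.
  - by rewrite preimage_setT; move/Lfun1_integrable : XY1.
rewrite /fubini_F /mul_coord /=.
under eq_integral => x _.
  under eq_integral => y _ do rewrite EFinM.
  rewrite integralZl //; last exact: integrable_id.
  over.
rewrite /= -expectation_id // -(fineK (expectation_fin_num Y1)) integralZr //.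
  by rewrite -expectation_id.
exact: integrable_id.
Qed.

End independent_expectation.

Section mutual_independence.
Context d (T : measurableType d) (R : realType) (P : probability T R).

Lemma mutually_independent_pair n (Y : 'I_n -> T -> R) (i j : 'I_n) (A B : set R) :
  mutually_independent P Y -> i != j -> measurable A -> measurable B ->
  P (Y i @^-1` A `&` Y j @^-1` B) = (P (Y i @^-1` A) * P (Y j @^-1` B))%E.
Proof.
move=> indepY ij mA mB.
pose B_ k := if k == i then A else if k == j then B else setT.
have mB_ k : measurable (B_ k) by rewrite /B_; case: ifP => // _; case: ifP.
have ji : (j == i) = false by rewrite eq_sym (negbTE ij).
have := indepY [set i; j]%SET B_ mB_.
rewrite big_setU1 ?inE //= big_set1 /B_ eqxx ji eqxx => <-.
congr (P _); apply/seteqP; split => [w [Ai Bj] k /=|w Iw].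
  by rewrite !inE => /orP[] /eqP ->; rewrite ?eqxx ?ji.
by split; [have := Iw i | have := Iw j]; rewrite /= ?eqxx ?ji !inE ?eqxx ?orbT; apply.
Qed.

Lemma covariance_indep n (Y : 'I_n -> {RV P >-> R}) (i j : 'I_n) :
  mutually_independent P (fun k => (Y k : T -> R)) ->
  (forall k, (Y k : T -> R) \in Lfun P 2%:E) -> i != j ->
  covariance P (Y i) (Y j) = 0%E.
Proof.
move=> indepY L2Y ij.
have L1Y k := Lfun_subset12 (fin_num_measure P _ measurableT) (L2Y k).
rewrite covarianceE // ?Lfun2_mul_Lfun1 // expectation_mul_indep //.
- by rewrite subee // fin_numM // expectation_fin_num.
- by move=> A B mA mB; exact: (mutually_independent_pair (Y := fun k => (Y k : T -> R))).
- exact: Lfun2_mul_Lfun1.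
Qed.

End mutual_independence.

Section second_moment.
Context d (T : measurableType d) (R : realType) (P : probability T R).
Local Open Scope ereal_scope.

Lemma expectation_bigsum (I : eqType) (r : seq I) (h : I -> T -> R) :
  (forall i, h i \in Lfun P 1) ->
  'E_P[fun w => (\sum_(i <- r) h i w)%R] = \sum_(i <- r) 'E_P[h i].
Proof.
move=> L1h; rewrite -fct_sumE -(big_map h predT id) expectation_sum ?big_map //.
by move=> _ /mapP[i _ ->].
Qed.

Lemma variance_le_expectation_sqr (X : T -> R) : X \in Lfun P 2%:E ->
  'V_P[X] <= 'E_P[(X ^+ 2)%R].
Proof.
move=> L2X; have L1X := Lfun_subset12 (fin_num_measure P _ measurableT) L2X.
rewrite varianceE // leeBlDr; last by rewrite fin_numX // expectation_fin_num.
by rewrite lee_paddr // sqre_ge0.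
Qed.

Section weighted_sum.
Variables (n : nat) (Y : 'I_n -> {RV P >-> R}).
Hypotheses (indepY : mutually_independent P (fun i => (Y i : T -> R)))
  (L2Y : forall i, (Y i : T -> R) \in Lfun P 2%:E).

Lemma expectation_sqr_weighted_sum (a : 'I_n -> R) :
  'E_P[fun w => ((\sum_i a i * (Y i w - fine 'E_P[Y i])) ^+ 2)%R]
    = \sum_i (a i ^+ 2)%:E * 'V_P[Y i].
Proof.
pose W i := ((Y i : T -> R) \- cst (fine 'E_P[Y i]))%R.
have L2W i : W i \in Lfun P 2%:E.
  apply: rpredB => //; first by rewrite lee1n.
  by move=> ?; exact: Lfun_cst.
pose h i j := ((a i * a j) \o* (W i \* W j))%R.
have L1h i j : h i j \in Lfun P 1 by apply: Lfun_scale => //; exact: Lfun2_mul_Lfun1.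
have -> : (fun w => ((\sum_i a i * (Y i w - fine 'E_P[Y i])) ^+ 2)%R) =
    (fun w => \sum_i \sum_j h i j w)%R.
  apply/funext => w; rewrite expr2 mulr_suml; apply: eq_bigr => i _.
  by rewrite mulr_sumr; apply: eq_bigr => j _; rewrite /h /W /=; ring.
rewrite expectation_bigsum; last by move=> i; rewrite -fct_sumE rpred_sum.
have Eh i j : 'E_P[h i j] = (a i * a j)%:E * covariance P (Y i) (Y j).
  by rewrite expectationZl ?Lfun2_mul_Lfun1 // covariance.unlock.
apply: eq_bigr => i _; rewrite expectation_bigsum // (bigD1 i) //= big1 ?adde0.
  by rewrite Eh expr2.
by move=> j ji; rewrite Eh covariance_indep ?mule0 // eq_sym.
Qed.

Lemma expectation_sqr_weighted_sum_le (a : 'I_n -> R) (M : R) :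
  (forall i, 'E_P[((Y i : T -> R) ^+ 2)%R] <= M%:E) ->
  'E_P[fun w => ((\sum_i a i * (Y i w - fine 'E_P[Y i])) ^+ 2)%R]
    <= (M * \sum_i a i ^+ 2)%:E.
Proof.
move=> momentY; rewrite expectation_sqr_weighted_sum mulr_sumr -sumEFin.
apply: lee_sum => i _; rewrite (mulrC M) (EFinM (a i ^+ 2)).
apply: lee_wpmul2l; first by rewrite lee_fin sqr_ge0.
exact: le_trans (variance_le_expectation_sqr (L2Y i)) (momentY i).
Qed.

End weighted_sum.

Lemma measurable_fun_gt (g : T -> R) (c : R) : measurable_fun setT g ->
  measurable [set w | (c < g w)%R].
Proof.
move=> mg; rewrite (_ : [set w | _] = g @^-1` `]c, +oo[%classic); last first.
  by apply/seteqP; split => w /=; rewrite in_itv /= andbT.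
by rewrite -[X in measurable X]setTI; exact: mg.
Qed.

Lemma markov_strict (g : T -> R) (c : R) : measurable_fun setT g ->
  (forall w, 0 <= g w)%R -> (0 < c)%R ->
  c%:E * P [set w | (c < g w)%R] <= 'E_P[g].
Proof.
move=> mg g0 c0; set E := [set w | (c < g w)%R].
have mE : measurable E := measurable_fun_gt c mg.
rewrite -(setIT E) -integral_indic //.
rewrite -(@integralZl_indic _ _ _ P setT measurableT (fun _ => E)) //; last first.
  by rewrite ltNge (ltW c0).
rewrite unlock; apply: ge0_le_integral => //.
- by move=> w _; rewrite lee_fin indicE mulr_ge0 ?ler0n ?ltW.
- by apply/measurable_EFinP; exact: measurable_funM.
- exact/measurable_EFinP.
- move=> w _; rewrite lee_fin indicE.
  by case: (boolP (w \in E)) => [|_]; rewrite ?mulr1 ?mulr0 // inE => /ltW.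
Qed.

End second_moment.

Section finmin_emp_l2.
Variable R : realType.

Lemma finmin_le (I : finType) (F : I -> R) (p : I) : finmin F <= F p.
Proof.
rewrite /finmin; case: pickP => [i0 _|none]; first exact: bigmin_le.
by have := none p.
Qed.

Lemma finmin_attained (I : finType) (F : I -> R) (p : I) : exists q, finmin F = F q.
Proof.
rewrite /finmin; case: pickP => [i0 _|none]; last by have := none p.
exists [arg min_(i < i0) F i]%O; case: arg_minP => // q _ Fq.
by apply/le_anti; rewrite bigmin_le /=; apply/bigmin_geP; split => [|i _]; exact: Fq.
Qed.

Lemma finmin_ge0 (I : finType) (F : I -> R) : (forall p, 0 <= F p) -> 0 <= finmin F.
Proof.
move=> F0; rewrite /finmin; case: pickP => // i0 _.
by elim/big_ind: _ => // x y x0 y0; rewrite le_min x0.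
Qed.

Lemma emp_l2_ge0 n (u v : 'I_n -> R) : 0 <= emp_l2 u v.
Proof. by rewrite /emp_l2 mulr_ge0 ?invr_ge0 ?sumr_ge0 // => i _; exact: sqr_ge0. Qed.

Lemma natr_mul_emp_l2 n (u v : 'I_n -> R) : (0 < n)%N ->
  n%:R * emp_l2 u v = \sum_i (u i - v i) ^+ 2.
Proof.
move=> n_gt0; rewrite /emp_l2 mulrA mulfV ?pnatr_eq0 -?lt0n // mul1r.
by apply: eq_bigr => i _; rewrite real_normK ?num_real.
Qed.

Lemma emp_l2_eq0 n (u v : 'I_n -> R) : n = 0%N -> emp_l2 u v = 0.
Proof. by move=> n0; rewrite /emp_l2 (_ : n%:R = 0) ?invr0 ?mul0r // n0. Qed.

End finmin_emp_l2.

Lemma fin_num_bigmaxe (R : realDomainType) (J : Type) (r : seq J) (F : J -> \bar R) :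
  (forall j, F j \is a fin_num) -> \big[maxe/0%E]_(j <- r) F j \is a fin_num.
Proof. by move=> Ffin; elim/big_ind: _ => // x y; rewrite maxEle; case: ifP. Qed.

Lemma sum_sqr_sub_center (R : comRingType) (I : finType) (u y c : I -> R) :
  \sum_i (u i - y i) ^+ 2 = \sum_i (u i - c i) ^+ 2
    - 2 * \sum_i (u i - c i) * (y i - c i) + \sum_i (y i - c i) ^+ 2.
Proof.
rewrite mulr_sumr -sumrN -!big_split /=; apply: eq_bigr => i _; ring.
Qed.

Section least_squares_oracle.
Variable R : realFieldType.

Lemma le_of_sqr_le (x y : R) : 0 <= y -> x ^+ 2 <= y ^+ 2 -> x <= y.
Proof. by move=> y0 le_sqr; rewrite leNgt; apply/negP => lt_yx; nra. Qed.

Lemma le_cross_amgm (s a dl k : R) : 0 < k -> 0 <= a -> 0 <= dl ->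
  s ^+ 2 <= dl * a -> 2 * s <= k * a + dl / k.
Proof.
move=> k_gt0 a0 dl0 s2.
have k0 := ltW k_gt0.
apply: le_of_sqr_le; first by rewrite addr_ge0 ?divr_ge0 ?mulr_ge0.
have amgm : (k * a + dl / k) ^+ 2 - (k * a - dl / k) ^+ 2 = 4 * (dl * a).
  by field; rewrite gt_eqF.
rewrite (_ : (2 * s) ^+ 2 = 4 * s ^+ 2); last by ring.
apply: (le_trans (y := 4 * (dl * a))); first by rewrite ler_pM2l.
by rewrite -amgm gerBl sqr_ge0.
Qed.

Lemma least_squares_oracle (I : finType) (u v y c : I -> R) (dl : R) : 0 <= dl ->
  \sum_i (u i - y i) ^+ 2 <= \sum_i (v i - y i) ^+ 2 ->
  (\sum_i (u i - c i) * (y i - c i)) ^+ 2 <= dl * \sum_i (u i - c i) ^+ 2 ->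
  (\sum_i (v i - c i) * (y i - c i)) ^+ 2 <= dl * \sum_i (v i - c i) ^+ 2 ->
  \sum_i (u i - c i) ^+ 2 <= 6 * dl + 4 * \sum_i (v i - c i) ^+ 2.
Proof.
rewrite (sum_sqr_sub_center u y c) (sum_sqr_sub_center v y c) lerD2r.
set a := \sum_i (u i - c i) ^+ 2; set b := \sum_i (v i - c i) ^+ 2.
set s := \sum_i _ * _; set t := \sum_i _ * _ => dl0 le_ab s2 t2.
have a0 : 0 <= a by rewrite sumr_ge0 // => i _; exact: sqr_ge0.
have b0 : 0 <= b by rewrite sumr_ge0 // => i _; exact: sqr_ge0.
have half_gt0 : 0 < 2^-1 :> R by rewrite invr_gt0.
have le_s := le_cross_amgm half_gt0 a0 dl0 s2.
have le_t : 2 * - t <= 1 * b + dl / 1.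
  by apply: le_cross_amgm; rewrite ?sqrrN.
rewrite invrK in le_s.
lra.
Qed.

End least_squares_oracle.

Section least_squares.
Context d (T : measurableType d) (R : realType) (P : probability T R).
Variables (n : nat) (I : finType) (Y : 'I_n -> {RV P >-> R}) (mu : 'I_n -> R)
  (f : I -> 'I_n -> R) (M : R).
Hypotheses (indepY : mutually_independent P (fun i => (Y i : T -> R)))
  (L2Y : forall i, (Y i : T -> R) \in Lfun P 2%:E)
  (meanY : forall i, ('E_P[Y i])%E = (mu i)%:E)
  (M_ge0 : 0 <= M)
  (momentY : forall i, ('E_P[((Y i : T -> R) ^+ 2)%R] <= M%:E)%E).

Let bias p := \sum_i (f p i - mu i) ^+ 2.
Let cross p w := \sum_i (f p i - mu i) * (Y i w - mu i).

Let measurable_cross_sqr p : measurable_fun setT (fun w => cross p w ^+ 2).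
Proof.
apply: measurable_funX; apply: measurable_sum => i.
by apply: measurable_funM => //; exact: measurable_funB.
Qed.

Let expectation_cross_sqr p : ('E_P[fun w => (cross p w ^+ 2)%R] <= (M * bias p)%:E)%E.
Proof.
rewrite (_ : (fun w => _) = fun w =>
    (\sum_i (f p i - mu i) * (Y i w - fine ('E_P[Y i])%E)) ^+ 2).
  exact: expectation_sqr_weighted_sum_le.
by apply/funext => w; congr (_ ^+ 2); apply: eq_bigr => i _; rewrite meanY.
Qed.

Let cross_tail p (dl : R) : 0 < dl ->
  (P [set w | (dl * bias p < cross p w ^+ 2)%R] <= (M / dl)%:E)%E.
Proof.
move=> dl_gt0.
have [bias0|bias_neq0] := eqVneq (bias p) 0.
  suff -> : [set w | (dl * bias p < cross p w ^+ 2)%R] = set0.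
    by rewrite measure0 lee_fin divr_ge0 // ltW.
  apply/seteqP; split => // w /=; rewrite bias0 mulr0 /cross big1 ?expr0n ?ltxx // => i _.
  have /eqP : (f p i - mu i) ^+ 2 = 0.
    by apply: (psumr_eq0P _ bias0) => // j _; exact: sqr_ge0.
  by rewrite sqrf_eq0 => /eqP ->; rewrite mul0r.
have bias_gt0 : 0 < bias p.
  by rewrite lt_def bias_neq0 sumr_ge0 // => i _; exact: sqr_ge0.
have c_gt0 : 0 < dl * bias p by rewrite mulr_gt0.
have := le_trans (markov_strict P (measurable_cross_sqr p) (fun w => sqr_ge0 _) c_gt0)
  (expectation_cross_sqr p).
have mE := measurable_fun_gt (dl * bias p) (measurable_cross_sqr p).
rewrite -(fineK (fin_num_measure P _ mE)) -EFinM !lee_fin => le_M.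
rewrite -(ler_pM2l c_gt0) (le_trans le_M) // [leRHS](_ : _ = M * bias p) //.
by field; rewrite gt_eqF.
Qed.

Variable pstar : T -> I.
Hypotheses (measurable_pstar : forall p, measurable (pstar @^-1` [set p]))
  (pstar_min : forall w, emp_l2 (f (pstar w)) (fun i => Y i w)
                         = finmin (fun p => emp_l2 (f p) (fun i => Y i w))).

Let err p := emp_l2 (f p) mu.

Let measurable_large_err (r : R) : measurable [set w | r < err (pstar w)].
Proof.
rewrite (_ : [set w | r < err (pstar w)] =
    \bigcup_(p in [set p | r < err p]) pstar @^-1` [set p]).
  by apply: fin_bigcup_measurable => //; exact: finite_finset.
by apply/seteqP; split => [w /= large|w [p /= large ->]]; first by exists (pstar w).
Qed.

Let large_err_sub (eps : R) : 0 < eps -> (0 < n)%N ->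
  [set w | eps + 18 * finmin err < err (pstar w)] `<=`
  \bigcup_(p in setT) [set w | eps * n%:R / 6 * bias p < cross p w ^+ 2].
Proof.
move=> eps_gt0 n_gt0 w /= large.
have [[p cross_large]|none] :=
  pselect (exists p, eps * n%:R / 6 * bias p < cross p w ^+ 2).
  by exists p.
have small p : cross p w ^+ 2 <= eps * n%:R / 6 * bias p.
  by rewrite leNgt; apply/negP => cross_large; apply: none; exists p.
have [q errq] := finmin_attained err (pstar w).
have dl_ge0 : 0 <= eps * n%:R / 6 by rewrite divr_ge0 // mulr_ge0 // ltW.
have fit_le : \sum_i (f (pstar w) i - Y i w) ^+ 2 <= \sum_i (f q i - Y i w) ^+ 2.
  by rewrite -!(natr_mul_emp_l2 _ _ n_gt0) ler_pM2l ?ltr0n // pstar_min finmin_le.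
have := least_squares_oracle dl_ge0 fit_le (small (pstar w)) (small q).
rewrite -!(natr_mul_emp_l2 _ _ n_gt0) => oracle.
have err_le : err (pstar w) <= eps + 4 * err q.
  rewrite -(@ler_pM2l _ n%:R) ?ltr0n //; apply: le_trans oracle _.
  by rewrite /err [leLHS](_ : _ = n%:R * (eps + 4 * emp_l2 (f q) mu)) //; field.
have := emp_l2_ge0 (f q) mu; rewrite -/(err q) => errq0.
lra.
Qed.

Lemma least_squares_tail (eps : R) : 0 < eps -> (0 < n)%N ->
  (P [set w | (eps + 18 * finmin err < err (pstar w))%R]
    <= (6 * M * (#|I|%:R / (eps * n%:R)))%:E)%E.
Proof.
move=> eps_gt0 n_gt0.
have dl_gt0 : 0 < eps * n%:R / 6 by rewrite divr_gt0 // mulr_gt0 // ltr0n.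
have := content_sub_fsum P (D := setT)
  (A_ := fun p => [set w | eps * n%:R / 6 * bias p < cross p w ^+ 2]) finite_finset
  (fun p _ => measurable_fun_gt _ (measurable_cross_sqr p)) (measurable_large_err _)
  (large_err_sub eps_gt0 n_gt0).
move/le_trans; apply.
rewrite (fsbigE (enum I)) ?enum_uniq //; last by move=> i _; rewrite mem_enum.
apply: (@le_trans _ _ (\sum_(p <- enum I | p \in [set: I]) (M / (eps * n%:R / 6))%:E)%E).
  by apply: lee_sum => p _; exact: cross_tail.
under eq_bigl => p do rewrite in_setT.
rewrite sumEFin lee_fin big_enum /= sumr_const -(mulr_natr (M / _)).
rewrite [leLHS](_ : _ = 6 * M * (#|I|%:R / (eps * n%:R))) //.
by field; rewrite pnatr_eq0 -lt0n n_gt0 gt_eqF.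
Qed.

End least_squares.

Unset Implicit Arguments.

Theorem lemma6p1 (R : realType) :
  exists c1 : R, forall (dd : nat) (n : nat) (x : 'I_n -> 'rV[R]_dd)
    (d : measure_display) (T : measurableType d) (P : probability T R)
    (Y : 'I_n -> {RV P >-> R}) (m : 'rV[R]_dd -> R)
    (Pn : finType) (mp : Pn -> 'rV[R]_dd -> R) (pstar : T -> Pn) (eps : R),
    mutually_independent P (fun i => (Y i : T -> R)) ->
    (forall i, (Y i : T -> R) \in Lfun P 2%:E) ->
    (forall i, ('E_P[Y i])%E = (m (x i))%:E) ->
    (forall p : Pn, measurable (pstar @^-1` [set p])) ->
    (forall w, emp_l2 (fun i => mp (pstar w) (x i)) (fun i => Y i w)
               = finmin (fun p => emp_l2 (fun i => mp p (x i)) (fun i => Y i w))) ->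
    0 < eps ->
    (P [set w | emp_l2 (fun i => mp (pstar w) (x i)) (fun i => m (x i))
               > eps + 18 * finmin (fun p => emp_l2 (fun i => mp p (x i)) (fun i => m (x i)))]%R
     <= c1%:E * (\big[maxe/0%E]_(i < n) 'E_P[((Y i : T -> R) ^+ 2)%R])
        * ((#|Pn|)%:R / (eps * n%:R))%R%:E)%E.
Proof.
exists 6 => dd n x d T P Y m Pn mp pstar eps indepY L2Y meanY mpstar pstar_min eps_gt0.
set E := (X in (P X <= _)%E).
have [n0|n_gt0] := posnP n.
  rewrite (_ : n%:R = 0 :> R); last by rewrite n0.
  rewrite mulr0 invr0 mulr0 mule0.
  suff -> : E = set0 by rewrite measure0.
  apply/seteqP; split => // w; rewrite /E /= emp_l2_eq0 // ltNge.
  rewrite addr_ge0 ?mulr_ge0 ?(ltW eps_gt0) ?finmin_ge0 // => p; exact: emp_l2_ge0.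
set Mx := \big[maxe/0%E]_(i < n) _.
have Mx_fin : Mx \is a fin_num.
  rewrite /Mx; apply: fin_num_bigmaxe => i; apply: expectation_fin_num.
  by rewrite expr2; exact: Lfun2_mul_Lfun1.
have M_ge0 : 0 <= fine Mx by rewrite fine_ge0 // bigmax_ge_id.
have momentY i : ('E_P[((Y i : T -> R) ^+ 2)%R] <= (fine Mx)%:E)%E.
  by rewrite fineK //; exact: le_bigmax.
rewrite -(fineK Mx_fin) -!EFinM.
exact: (least_squares_tail (f := fun p i => mp p (x i)) indepY L2Y meanY M_ge0 momentY
  mpstar pstar_min eps_gt0 n_gt0).
Qed.
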